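(* Let $l$ be a prime, $n\ge 2$, and $\mathcal{G}_n=\langle\alpha_1,\dots,\alpha_n\rangle\le S_{l^n}$ with $\alpha_r$ the product of the $l$-cycles $(j,\ j+l^{r-1},\dots,\ j+(l-1)l^{r-1})$, $j=1,\dots,l^{r-1}$. Let $\beta_i=((i-1)l+1,\ (i-1)l+2,\dots,\ il)$ for $1\le i\le l^{n-1}$. Then every $l$-cycle in $\mathcal{G}_n$ is of the form $\beta_i^j$ for some $i$ and $j$, and the conjugacy class of $\alpha_1=\beta_1$ in $\mathcal{G}_n$ is exactly $\{\beta_1,\dots,\beta_{l^{n-1}}\}$; in particular it has $l^{n-1}$ elements. *)

From HB Require Import structures.
From mathcomp Require Import all_boot all_order all_fingroup.
Set Implicit Arguments. Unset Strict Implicit. Unset Printing Implicit Defensive.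

(* Points {1,...,N} of the paper are represented 0-indexed by 'I_N
   (paper point p  <->  ordinal p-1).  A point x is written in base l;
   [digit_incr l q x] (q = l^k) increments the base-l digit of x at
   position k modulo l, leaving all other digits unchanged. *)
Definition digit_incr (l q x : nat) : nat :=
  (x %/ (q * l)) * (q * l) + ((x %/ q %% l).+1 %% l) * q + x %% q.
Definition digit_decr (l q x : nat) : nat :=
  (x %/ (q * l)) * (q * l) + ((x %/ q %% l + l.-1) %% l) * q + x %% q.

(* [block_rot l q m N]: on the block {m*q*l, ..., (m+1)*q*l - 1} (provided
   it lies inside [0,N)) increment the digit at position q; identity
   elsewhere.  This is a product of q disjoint l-cycles
   (j, j+q, ..., j+(l-1)q), j = m*q*l, ..., m*q*l + q - 1. *)
Definition blk_ok (l q m N x : nat) : bool :=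
  [&& 0 < q, 0 < l, x %/ (q * l) == m & m.+1 * (q * l) <= N].
Definition block_rot (l q m N x : nat) : nat :=
  if blk_ok l q m N x then digit_incr l q x else x.
Definition block_rot_inv (l q m N x : nat) : nat :=
  if blk_ok l q m N x then digit_decr l q x else x.

Lemma decomp_digits (l q A e c : nat) : 0 < q -> 0 < l -> c < q -> e < l ->
  let y := A * (q * l) + e * q + c in
  [/\ y %/ (q * l) = A, y %/ q %% l = e & y %% q = c].
Proof.
move=> q0 l0 cq el y.
have ql0 : 0 < q * l by rewrite muln_gt0 q0.
have Hy : y = (A * l + e) * q + c by rewrite /y mulnDl -mulnA [l * q]mulnC.
have Hdq : y %/ q = A * l + e by rewrite Hy divnMDl // divn_small // addn0.
split.
- rewrite /y -addnA divnMDl // divn_small ?addn0 //.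
  apply: (@leq_trans (e.+1 * q)); first by rewrite mulSnr ltn_add2l.
  by rewrite mulnC leq_mul2l el orbT.
- by rewrite Hdq modnMDl modn_small.
- by rewrite Hy modnMDl modn_small.
Qed.

Lemma digit_eq (l q x : nat) :
  x = (x %/ (q * l)) * (q * l) + (x %/ q %% l) * q + x %% q.
Proof.
rewrite divnMA [q * l]mulnC mulnA -mulnDl -divn_eq; exact: divn_eq.
Qed.

Lemma digit_incr_blk l q x : 0 < q -> 0 < l ->
  digit_incr l q x %/ (q * l) = x %/ (q * l).
Proof.
move=> q0 l0; have [-> _ _] := decomp_digits (x %/ (q * l)) q0 l0
  (ltn_pmod x q0) (ltn_pmod (x %/ q %% l).+1 l0); done.
Qed.

Lemma digit_decr_blk l q x : 0 < q -> 0 < l ->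
  digit_decr l q x %/ (q * l) = x %/ (q * l).
Proof.
move=> q0 l0; have [-> _ _] := decomp_digits (x %/ (q * l)) q0 l0
  (ltn_pmod x q0) (ltn_pmod (x %/ q %% l + l.-1) l0); done.
Qed.

Lemma digit_incrK l q x : 0 < q -> 0 < l ->
  digit_decr l q (digit_incr l q x) = x.
Proof.
move=> q0 l0.
have [H1 H2 H3] := decomp_digits (x %/ (q * l)) q0 l0
  (ltn_pmod x q0) (ltn_pmod (x %/ q %% l).+1 l0).
rewrite /digit_decr H1 H2 H3 modnDml addSnnS prednK // modnDr modn_mod.
by rewrite -digit_eq.
Qed.

Lemma block_rotK l q m N : cancel (block_rot l q m N) (block_rot_inv l q m N).
Proof.
move=> x; rewrite /block_rot /block_rot_inv.
case Hx: (blk_ok l q m N x); last by rewrite Hx.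
move: (Hx) => /and4P [q0 l0 /eqP xm mN].
by rewrite /blk_ok q0 l0 digit_incr_blk // xm eqxx mN /= digit_incrK.
Qed.

Lemma block_rot_lt l q m N x : x < N -> block_rot l q m N x < N.
Proof.
rewrite /block_rot; case Hx: (blk_ok l q m N x) => // xN.
move: Hx => /and4P [q0 l0 /eqP xm mN].
apply: leq_trans mN.
have ql0 : 0 < q * l by rewrite muln_gt0 q0.
by rewrite -xm -(digit_incr_blk x q0 l0) ltn_ceil.
Qed.

Definition block_rot_ord (l q m N : nat) (x : 'I_N) : 'I_N :=
  Ordinal (block_rot_lt l q m (ltn_ord x)).

Lemma block_rot_ord_inj l q m N : injective (@block_rot_ord l q m N).
Proof.
move=> x y /(congr1 val) /= /(can_inj (@block_rotK l q m N)) H.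
exact: val_inj.
Qed.

Definition block_perm (l q m N : nat) : {perm 'I_N} :=
  perm (@block_rot_ord_inj l q m N).

(* alpha_r (1 <= r <= n): product of the l-cycles
   (j, j + l^(r-1), ..., j + (l-1) l^(r-1)), j = 1..l^(r-1)   (paper indexing),
   i.e. increment digit r-1 on the block {1, ..., l^r}. *)
Definition alpha (l n r : nat) : {perm 'I_(l ^ n)} :=
  block_perm l (l ^ r.-1) 0 (l ^ n).

(* beta_i (1 <= i <= l^(n-1)): the l-cycle ((i-1)l+1, (i-1)l+2, ..., il). *)
Definition beta (l n i : nat) : {perm 'I_(l ^ n)} :=
  block_perm l 1 i.-1 (l ^ n).

Definition Gn (l n : nat) : {set {perm 'I_(l ^ n)}} :=
  <<[set alpha l n (val r).+1 | r : 'I_n]>>%g.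

Definition is_kcycle (T : finType) (k : nat) (s : {perm T}) : Prop :=
  exists x : T, #|porbit s x| = k /\ forall y, y \notin porbit s x -> s y = y.

From HB Require Import structures.
From mathcomp Require Import all_boot all_order all_fingroup.
Set Implicit Arguments. Unset Strict Implicit. Unset Printing Implicit Defensive.

(* Points are 0, ..., l^n - 1, written in base l; the i-th block is
   {i*l, ..., i*l + l - 1}.  Let R be the permutation adding 1 modulo l to
   the lowest digit, i.e. R = beta_1 ... beta_(l^(n-1)) rotates every block.
   Each generator alpha_r only changes digit r-1 (and for r = 1 it is the
   rotation of block 0), so it commutes with R: G_n lies in the centralizer
   C(R).  Everything follows from properties of C(R) and one of G_n:
   - an element of C(R) commutes with all block rotations, hence permutes
     the blocks (the R-orbits);
   - so an l-cycle in C(R) has a whole block as its cycle, acts on it as a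
     power of R, and is therefore a power of a single beta_i;
   - conjugating beta_1 = alpha_1 by g in C(R) gives the beta of the block
     containing g(0);
   - G_n is transitive (setting digits one by one with powers of the
     alpha_r), so every beta_i is a conjugate of alpha_1; the beta_i are
     pairwise distinct, which gives the cardinality. *)

Definition lowrot (l k x : nat) : nat := x %/ l * l + (x %% l + k) %% l.

Lemma lowrot_div l k x : 0 < l -> lowrot l k x %/ l = x %/ l.
Proof. by move=> l0; rewrite /lowrot divnMDl // (divn_small (ltn_pmod _ l0)) addn0. Qed.

Lemma lowrot_mod l k x : 0 < l -> lowrot l k x %% l = (x %% l + k) %% l.
Proof. by move=> l0; rewrite /lowrot modnMDl modn_mod. Qed.

Lemma lowrot0 l x : lowrot l 0 x = x.
Proof. by rewrite /lowrot addn0 modn_mod -divn_eq. Qed.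

Lemma lowrot_add l a b x : 0 < l -> lowrot l a (lowrot l b x) = lowrot l (b + a) x.
Proof. by move=> l0; rewrite {1}/lowrot lowrot_div // lowrot_mod // modnDml /lowrot addnA. Qed.

Lemma lowrot_inj l k : 0 < l -> injective (lowrot l k).
Proof.
move=> l0 a b E.
have Ediv : a %/ l = b %/ l by rewrite -(lowrot_div k a l0) E lowrot_div.
have Emod : a %% l + k == b %% l + k %[mod l] by rewrite -!lowrot_mod // E.
rewrite eqn_modDr !modn_mod in Emod.
by rewrite (divn_eq a l) (divn_eq b l) Ediv (eqP Emod).
Qed.

Lemma lowrot_same_block l x y : 0 < l -> y %/ l = x %/ l ->
  y = lowrot l ((y %% l + (l - x %% l)) %% l) x.
Proof.
move=> l0 E; rewrite /lowrot modnDmr addnCA subnKC ?(ltnW (ltn_pmod _ l0)) //.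
by rewrite modnDr modn_mod -E -divn_eq.
Qed.

Lemma block_le l N x : 0 < l -> l %| N -> x < N -> (x %/ l).+1 * l <= N.
Proof.
move=> l0 dN xN; rewrite -[X in _ <= X](divnK dN) leq_mul2r.
by rewrite ltn_divLR ?divnK ?xN ?orbT.
Qed.

Lemma lowrot_lt l k x N : 0 < l -> l %| N -> x < N -> lowrot l k x < N.
Proof.
move=> l0 dN xN; apply: leq_trans (block_le l0 dN xN).
by rewrite mulSn addnC /lowrot ltn_add2l ltn_pmod.
Qed.

Lemma lowrot_addl l k Y c : 0 < l -> l %| Y -> lowrot l k (Y + c) = Y + lowrot l k c.
Proof.
move=> l0 dY; rewrite /lowrot divnDl // mulnDl divnK // -addnA; congr (_ + _).
by rewrite -(modnDml Y c) (eqP dY) add0n.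
Qed.

Lemma digit_incr1 l x : digit_incr l 1 x = lowrot l 1 x.
Proof. by rewrite /digit_incr /lowrot !mul1n divn1 muln1 modn1 addn0 addn1. Qed.

Lemma lowrot_digits l q x : 0 < l -> 0 < q -> l %| q ->
  let A := x %/ (q * l) in let e := x %/ q %% l in let c := x %% q in
  lowrot l 1 x = A * (q * l) + e * q + lowrot l 1 c /\ lowrot l 1 c < q.
Proof.
move=> l0 q0 dq A e c; split; last exact: lowrot_lt (ltn_pmod x q0).
rewrite {1}(digit_eq l q x) -/A -/e -/c lowrot_addl //.
by rewrite dvdn_add // dvdn_mull // ?dvdn_mull // dvdn_mulr.
Qed.

(* Rotating digit 0 commutes with a block rotation of digit k, q = l^k:
   for k > 0 the two act on different digits, for k = 0 they agree. *)
Lemma block_rot_lowrot l q m N x : 0 < l -> (q = 1 \/ l %| q) ->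
  block_rot l q m N (lowrot l 1 x) = lowrot l 1 (block_rot l q m N x).
Proof.
move=> l0 [->|dq].
  by rewrite /block_rot /blk_ok !mul1n lowrot_div //; case: ifP; rewrite ?digit_incr1.
have [->|q0] := posnP q; first by rewrite /block_rot /blk_ok.
have [Hx Hc] := lowrot_digits x l0 q0 dq.
have [D1 D2 D3] := decomp_digits (x %/ (q * l)) q0 l0 Hc (ltn_pmod (x %/ q) l0).
rewrite /block_rot /blk_ok Hx D1; case: ifP => // _.
rewrite /digit_incr D1 D2 D3 lowrot_addl //.
by rewrite dvdn_add // dvdn_mull // ?dvdn_mull // dvdn_mulr.
Qed.

Section Blocks.
Variables l n : nat.
Hypothesis l_gt1 : 1 < l.
Hypothesis n_gt0 : 0 < n.
Local Notation N := (l ^ n).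
Let l_gt0 : 0 < l. Proof. exact: ltnW. Qed.
Let l_dvd_N : l %| N. Proof. by rewrite dvdn_exp. Qed.

Lemma block_index_lt (x : 'I_N) : x %/ l < l ^ (n - 1).
Proof. by rewrite ltn_divLR // -expnSr subn1 prednK. Qed.

Lemma block_start_lt i : i < l ^ (n - 1) -> i * l < N.
Proof. by move=> i_lt; rewrite -(prednK n_gt0) expnSr ltn_pmul2r // -subn1. Qed.

Definition lowrot_ord k (x : 'I_N) : 'I_N :=
  Ordinal (lowrot_lt k l_gt0 l_dvd_N (ltn_ord x)).

Lemma lowrot_ord_inj k : injective (lowrot_ord k).
Proof. by move=> a b /(congr1 val) /(lowrot_inj l_gt0) /val_inj. Qed.

Lemma lowrot_ord_add a b x :
  lowrot_ord a (lowrot_ord b x) = lowrot_ord (b + a) x.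
Proof. by apply: val_inj; rewrite /= lowrot_add. Qed.

Definition R : {perm 'I_N} := perm (@lowrot_ord_inj 1).

Lemma R_expE k x : (R ^+ k)%g x = lowrot_ord k x.
Proof.
elim: k x => [|k IH] x; first by apply: val_inj; rewrite expg0 perm1 /= lowrot0.
by rewrite expgSr permM IH permE lowrot_ord_add addn1.
Qed.

Definition block (x : 'I_N) : {set 'I_N} := [set lowrot_ord (val k) x | k : 'I_l].

Lemma mem_block x y : (y \in block x) = (y %/ l == x %/ l).
Proof.
apply/imsetP/eqP => [[k _ ->]|E]; first exact: lowrot_div.
have k_lt : (y %% l + (l - x %% l)) %% l < l by rewrite ltn_pmod.
by exists (Ordinal k_lt) => //; apply: val_inj; rewrite /= -lowrot_same_block.
Qed.

Lemma card_block x : #|block x| = l.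
Proof.
rewrite card_imset ?card_ord // => k1 k2 /(congr1 val) /= E.
have : x %% l + k1 == x %% l + k2 %[mod l] by rewrite -!lowrot_mod // E.
by rewrite eqn_modDl !modn_small // => /eqP /val_inj.
Qed.

Lemma alpha_val r (x : 'I_N) :
  val (alpha l n r x) = block_rot l (l ^ r.-1) 0 N x.
Proof. by rewrite /alpha /block_perm permE. Qed.

Lemma betaE i (x : 'I_N) :
  beta l n i.+1 x = if x %/ l == i then lowrot_ord 1 x else x.
Proof.
apply: val_inj; rewrite /beta /block_perm permE /= /block_rot /blk_ok !mul1n l_gt0 /=.
by case: eqP => //= <-; rewrite block_le ?digit_incr1.
Qed.

Lemma betaXE i c (x : 'I_N) :
  (beta l n i.+1 ^+ c)%g x = if x %/ l == i then lowrot_ord c x else x.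
Proof.
elim: c => [|c IH].
  by rewrite expg0 perm1; case: ifP => // _; apply: val_inj; rewrite /= lowrot0.
rewrite expgSr permM betaE IH.
have [xi|xi] := eqVneq (x %/ l) i; last by rewrite (negbTE xi).
by rewrite /= lowrot_div // xi eqxx lowrot_ord_add addn1.
Qed.

Lemma alpha_commute_R r : r < n -> commute (alpha l n r.+1) R.
Proof.
move=> rn; apply/permP => x; rewrite !permM !permE; apply: val_inj.
rewrite /= block_rot_lowrot //.
by case: r rn => [|r] rn; [left | right; rewrite dvdn_exp].
Qed.

Lemma Gn_sub_cent : Gn l n \subset 'C[R]%g.
Proof.
rewrite /Gn gen_subG; apply/subsetP => g /imsetP [r _ ->].
by apply/cent1P; apply: alpha_commute_R (ltn_ord r).
Qed.

Section Centralizer.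
Variable g : {perm 'I_N}.
Hypothesis gR : g \in 'C[R]%g.

Lemma cent_lowrot k x : g (lowrot_ord k x) = lowrot_ord k (g x).
Proof. by rewrite -!R_expE -!permM (commuteX k (cent1P gR)). Qed.

Lemma block_cent x : block (g x) = g @: block x.
Proof. by rewrite /block -imset_comp; apply: eq_imset => k; rewrite /= cent_lowrot. Qed.

Lemma cent_same_block a b : (g a %/ l == g b %/ l) = (a %/ l == b %/ l).
Proof. by rewrite -!mem_block block_cent mem_imset //; apply: perm_inj. Qed.

Lemma conj_beta i (y : 'I_N) :
  y %/ l = i -> (beta l n i.+1 ^ g)%g = beta l n (g y %/ l).+1.
Proof.
move=> yi; apply/permP => z; rewrite conjgE !permM -{2}(permKV g z).
move: (g^-1%g z) => w; rewrite !betaE cent_same_block yi.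
by case: ifP => // _; rewrite cent_lowrot.
Qed.

End Centralizer.

(* An l-cycle commuting with R has a block as its cycle: s moves x, hence
   moves every rotation of x, and the block of x has exactly l points. *)
Lemma cent_kcycle_block s : s \in 'C[R]%g -> is_kcycle l s ->
  exists x, porbit s x = block x /\ forall y, y \notin block x -> s y = y.
Proof.
move=> sR [x [card_orbit fix_out]]; exists x.
have sx_ne : s x != x.
  have := uniq_traject_porbit s x.
  rewrite card_orbit -[X in traject _ _ X](subnKC l_gt1) add2n.
  by rewrite /= inE => /andP [/norP [] ]; rewrite eq_sym.
have block_sub : block x \subset porbit s x.
  apply/subsetP => _ /imsetP [k _ ->]; apply/negPn/negP => /fix_out.
  by rewrite cent_lowrot // => /lowrot_ord_inj sx_eq; rewrite sx_eq eqxx in sx_ne.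
have orbit_eq : porbit s x = block x.
  by apply/eqP; rewrite eq_sym eqEcard block_sub card_block card_orbit leqnn.
by split=> // y; rewrite -orbit_eq; apply: fix_out.
Qed.

Lemma cent_kcycle s : s \in 'C[R]%g -> is_kcycle l s ->
  exists i j : nat, (1 <= i <= l ^ (n - 1)) /\ s = (beta l n i ^+ j)%g.
Proof.
move=> sR /(cent_kcycle_block sR) [x [orbit_eq fix_out]].
have /imsetP [c _ sxE] : s x \in block x.
  by rewrite -orbit_eq -{1}(expg1 s) mem_porbit.
exists (x %/ l).+1, c; split; first by rewrite ltn0Sn block_index_lt.
apply/permP => y; rewrite betaXE -mem_block.
have [/imsetP [k _ ->]|y_out] := boolP (y \in block x); last exact: fix_out.
by rewrite cent_lowrot // sxE !lowrot_ord_add addnC.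
Qed.

Lemma alpha_in r : r < n -> alpha l n r.+1 \in Gn l n.
Proof. by move=> rn; rewrite mem_gen //; apply/imsetP; exists (Ordinal rn). Qed.

Lemma alphaX_val r d (y : 'I_N) : r < n -> d < l -> y < l ^ r ->
  val ((alpha l n r.+1 ^+ d)%g y) = d * l ^ r + y.
Proof.
move=> rn; elim: d => [|d IH] d_lt y_lt; first by rewrite expg0 perm1.
rewrite expgSr permM alpha_val IH ?(ltnW d_lt) //=.
have q_gt0 : 0 < l ^ r by rewrite expn_gt0 l_gt0.
have [D1 D2 D3] := decomp_digits 0 q_gt0 l_gt0 y_lt (ltnW d_lt).
rewrite mul0n add0n in D1 D2 D3.
rewrite /block_rot /blk_ok q_gt0 l_gt0 D1 eqxx mul1n -expnSr leq_exp2l // rn /=.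
by rewrite /digit_incr D1 D2 D3 mul0n add0n modn_small.
Qed.

Let N_gt0 : 0 < N. Proof. by rewrite expn_gt0 l_gt0. Qed.

Definition origin : 'I_N := Ordinal N_gt0.

(* Transitivity: choosing the digits of x one at a time, a product of
   powers of alpha_1, ..., alpha_k maps 0 to any x < l^k. *)
Lemma Gn_reaches k x : k <= n -> x < l ^ k ->
  exists2 g, g \in Gn l n & val (g origin) = x.
Proof.
elim: k x => [|k IH] x k_le x_lt.
  by exists 1%g; rewrite ?group1 // perm1; move: x_lt; rewrite ltnS leqn0 => /eqP.
have q_gt0 : 0 < l ^ k by rewrite expn_gt0 l_gt0.
have [g gG g0] := IH (x %% l ^ k) (ltnW k_le) (ltn_pmod _ q_gt0).
exists (g * alpha l n k.+1 ^+ (x %/ l ^ k))%g; first by rewrite groupM ?groupX ?alpha_in.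
rewrite permM alphaX_val ?g0 ?ltn_pmod // -?divn_eq //.
by rewrite ltn_divLR // -expnS.
Qed.

Lemma Gn_transitive (x : 'I_N) : exists2 g, g \in Gn l n & g origin = x.
Proof.
have [g gG g0] := Gn_reaches (leqnn n) (ltn_ord x).
by exists g => //; apply: val_inj.
Qed.

Lemma conj_alpha1 g :
  g \in Gn l n -> (alpha l n 1 ^ g)%g = beta l n (g origin %/ l).+1.
Proof.
move=> /(subsetP Gn_sub_cent) gR.
by rewrite (_ : alpha l n 1 = beta l n 0.+1) // (conj_beta gR (y := origin)) // div0n.
Qed.

(* beta_(i+1) moves the point i*l, which every other beta_j fixes. *)
Lemma beta_inj : injective (fun i : 'I_(l ^ (n - 1)) => beta l n (val i).+1).
Proof.
move=> i j /= beta_eq; apply/val_inj/eqP; apply: contraT => ij.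
pose p := Ordinal (block_start_lt (ltn_ord i)).
have := congr1 (fun s : {perm 'I_N} => val (s p) %% l) beta_eq.
rewrite !betaE mulnK // eqxx (negbTE ij) /= lowrot_mod // !modnMl add0n.
by rewrite (modn_small l_gt1).
Qed.

End Blocks.

Unset Implicit Arguments.

Theorem mainTheorem16 (l n : nat) (hl : prime l) (hn : 2 <= n) :
  (forall s : {perm 'I_(l ^ n)}, s \in Gn l n -> is_kcycle l s ->
     exists i j : nat, (1 <= i <= l ^ (n - 1)) /\ s = (beta l n i ^+ j)%g)
  /\ (alpha l n 1 ^: Gn l n)%g = [set beta l n (val i).+1 | i : 'I_(l ^ (n - 1))]
  /\ #|(alpha l n 1 ^: Gn l n)%g| = l ^ (n - 1).
Proof.
have l_gt1 := prime_gt1 hl; have n_gt0 : 0 < n := ltnW hn.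
have conj_class : (alpha l n 1 ^: Gn l n)%g =
    [set beta l n (val i).+1 | i : 'I_(l ^ (n - 1))].
  apply/setP => s; apply/imsetP/imsetP => [[g gG ->]|[i _ ->]].
    exists (Ordinal (block_index_lt l_gt1 n_gt0 (g (origin n l_gt1))));
    by rewrite // conj_alpha1.
  pose start_i := Ordinal (block_start_lt l_gt1 n_gt0 (ltn_ord i)).
  have [g gG g0] := Gn_transitive l_gt1 start_i.
  by exists g; rewrite // conj_alpha1 // g0 /= mulnK // ltnW.
split.
  by move=> s /(subsetP (Gn_sub_cent l_gt1 n_gt0)); apply: cent_kcycle.
by rewrite conj_class card_imset ?card_ord //; apply: beta_inj.
Qed.
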